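(* Under the hypotheses of Theorem 2 (NEAR-DGD$^t$ from a common initial point $s_0$, so $x_{i,0}=y_{i,0}=s_0$; each $f_i$ $\mu_i$-strongly convex with $L_i$-Lipschitz gradient; $0<\alpha\le\min\{1/L,c_4\}$), with $\alpha c_2<1$, $\delta=\frac{c_2}{2(1-\alpha c_2)}$, $c_1=\sqrt{1-\alpha c_2/2}$ and $c_3=\sqrt{\alpha(\alpha+\delta^{-1})}\,DL$, for all $k=0,1,2,\ldots$ and $1\le i\le n$: $$\|x_{i,k}-x^\star\|\le c_1^k\|s_0-x^\star\|+\frac{c_3}{\sqrt{1-c_1^2}}\beta^t+\beta^tD,$$ $$\|y_{i,k}-x^\star\|\le c_1^k\|s_0-x^\star\|+\frac{c_3}{\sqrt{1-c_1^2}}\beta^t+\beta^tD+2D.$$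
   Context: NEAR-DGD$^t$: $\mathbf{x}_k=(\mathbf{W}^t\otimes I_p)\mathbf{y}_k$, $\mathbf{y}_{k+1}=\mathbf{x}_k-\alpha\nabla\mathbf{f}(\mathbf{x}_k)$, $\nabla\mathbf{f}(\mathbf{x})=(\nabla f_1(x_1);\ldots;\nabla f_n(x_n))$, with $\mathbf{W}$ a symmetric doubly-stochastic matrix of a connected network ($w_{ii}>0$, $w_{ij}>0$ iff neighbours), simple eigenvalue $1$, other eigenvalues in $(-1,1)$, $\beta\in(0,1)$ its second largest eigenvalue magnitude. $x^\star$ is the minimizer of $h=\sum_if_i$. $L=\max_iL_i$, $\mu_{\bar f}=\frac1n\sum_i\mu_i$, $L_{\bar f}=\frac1n\sum_iL_i$, $c_2=\frac{2\mu_{\bar f}L_{\bar f}}{\mu_{\bar f}+L_{\bar f}}$, $c_4=\frac{2}{\mu_{\bar f}+L_{\bar f}}$, $D=\|\mathbf{y}_0-\mathbf{u}^\star\|+\frac{\nu+4}{\nu}\|\mathbf{u}^\star\|$, $\mathbf{u}^\star=(\arg\min f_1;\ldots;\arg\min f_n)$, $\nu=2\alpha\min_i\frac{\mu_iL_i}{\mu_i+L_i}$. *)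

From mathcomp Require Import all_boot.
From Stdlib Require Import Reals Relations.
Set Implicit Arguments. Unset Strict Implicit.
Open Scope R_scope.

Definition vec (p : nat) := 'I_p -> R.
Definition vadd p (u v : vec p) : vec p := fun l => u l + v l.
Definition vsub p (u v : vec p) : vec p := fun l => u l - v l.
Definition vscale p (a : R) (u : vec p) : vec p := fun l => a * u l.
Definition dot p (u v : vec p) : R := \big[Rplus/0]_(l < p) (u l * v l).
Definition norm p (u : vec p) : R := sqrt (dot u u).

(* stacked vectors in R^{np}: block i is the local vector of agent i *)
Definition snorm n p (z : 'I_n -> vec p) : R :=
  sqrt (\big[Rplus/0]_(i < n) dot (z i) (z i)).

Definition sumI n (F : 'I_n -> R) : R := \big[Rplus/0]_(i < n) F i.
Definition maxI n (F : 'I_n -> R) : R :=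
  match [seq F i | i <- enum 'I_n] with [::] => 0 | a :: s => foldr Rmax a s end.
Definition minI n (F : 'I_n -> R) : R :=
  match [seq F i | i <- enum 'I_n] with [::] => 0 | a :: s => foldr Rmin a s end.

Definition is_gradient p (f : vec p -> R) (g : vec p -> vec p) : Prop :=
  forall x eps, 0 < eps -> exists delta, 0 < delta /\
    forall h, norm h < delta ->
      Rabs (f (vadd x h) - f x - dot (g x) h) <= eps * norm h.

Definition strongly_convex p (mu : R) (f : vec p -> R) : Prop :=
  forall x y t, 0 <= t <= 1 ->
    f (vadd (vscale t x) (vscale (1 - t) y))
      <= t * f x + (1 - t) * f y - mu / 2 * t * (1 - t) * (norm (vsub x y)) ^ 2.

Definition lipschitz p (L : R) (g : vec p -> vec p) : Prop :=
  forall x y, norm (vsub (g x) (g y)) <= L * norm (vsub x y).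

Definition is_minimizer p (f : vec p -> R) (x : vec p) : Prop :=
  forall y, f x <= f y.

Definition mat n := 'I_n -> 'I_n -> R.
Definition mmul n (A B : mat n) : mat n :=
  fun i j => \big[Rplus/0]_(k < n) (A i k * B k j).
Definition mid n : mat n := fun i j => if i == j then 1 else 0.
Fixpoint mpow n (A : mat n) (t : nat) : mat n :=
  match t with O => @mid n | S t' => mmul A (mpow A t') end.

Definition is_eigenvalue n (W : mat n) (lam : R) : Prop :=
  exists v : 'I_n -> R, (exists i, v i <> 0) /\
    forall i, \big[Rplus/0]_(j < n) (W i j * v j) = lam * v i.

Definition sym_mat n (W : mat n) := forall i j, W i j = W j i.
Definition doubly_stochastic n (W : mat n) :=
  (forall i j, 0 <= W i j) /\
  (forall i, \big[Rplus/0]_(j < n) W i j = 1) /\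
  (forall j, \big[Rplus/0]_(i < n) W i j = 1).
Definition neighbours n (W : mat n) (i j : 'I_n) : Prop := i <> j /\ 0 < W i j.
Definition connected_net n (W : mat n) :=
  forall i j, clos_refl_trans _ (@neighbours n W) i j.
Definition simple_eig1 n (W : mat n) :=
  forall v : 'I_n -> R,
    (forall i, \big[Rplus/0]_(j < n) (W i j * v j) = v i) ->
    exists c, forall i, v i = c.
Definition second_eig_mag n (W : mat n) (beta : R) :=
  (exists lam, is_eigenvalue W lam /\ lam <> 1 /\ Rabs lam = beta) /\
  (forall lam, is_eigenvalue W lam -> lam <> 1 -> Rabs lam <= beta).

(* Each local gradient step contracts the distance to the local minimizer [u_i] by a factor
   [1 - nu], and mixing by the doubly stochastic [W^t] does not increase the stacked norm, so
   [|y_k - u|] stays below [|y_0 - u| + 4 |u| / nu].  Hence the deviation of [y_k] from its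
   mean is at most [D], and that of [x_k = W^t y_k] at most [beta^t D], because [W] contracts
   zero-sum vectors by [beta].  The mean of [x_k] performs an inexact gradient step on the
   average [h / n], which is [mubar]-strongly convex and [Lbar]-smooth, with error at most
   [L beta^t D]; Young's inequality with parameter [delta] turns the contraction factor
   [1 - alpha c2] into [c1^2] plus an additive [(c3 beta^t)^2], which sums geometrically.
   The spectral bound avoids the spectral theorem: the supremum of the quadratic form of
   [W^2 - J/n] on the unit sphere, when positive, is an eigenvalue of [W^2] with a zero-sum
   eigenvector, hence the square of an eigenvalue [+- r] of [W] other than [1]. *)

From mathcomp Require Import all_boot all_algebra Rstruct.
From Stdlib Require Import Reals Lra Psatz FunctionalExtensionality Classical.
Open Scope R_scope.
Set Implicit Arguments. Unset Strict Implicit.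

Lemma le_of_le_add_mul a b c : (forall e, 0 < e -> a <= b + e * c) -> a <= b.
Proof.
move=> H; have [c_le0|c_gt0] := Rle_lt_dec c 0.
  by have := H 1 Rlt_0_1; lra.
apply: Rle_plus_epsilon => eps eps_gt0.
have := H (eps / c) ltac:(apply: Rdiv_lt_0_compat; lra).
by have -> : eps / c * c = eps by field; lra.
Qed.

Lemma le_of_sqr_le a b : 0 <= b -> a * a <= b * b -> a <= b.
Proof. by move=> b_ge0 ab; apply: Rnot_lt_le => ba; nra. Qed.

Section FinSum.
Variable I : finType.
Implicit Types (F G u v : I -> R).

Definition fsum F := \big[Rplus/0]_(k : I) F k.
Definition fdot u v := fsum (fun k => u k * v k).
Definition fnorm u := sqrt (fdot u u).

Lemma eq_fsum F G : (forall k, F k = G k) -> fsum F = fsum G.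
Proof. by move=> FG; apply: eq_bigr => k _. Qed.

Lemma fsumD F G : fsum (fun k => F k + G k) = fsum F + fsum G.
Proof. exact: big_split. Qed.

Lemma fsumZ c F : fsum (fun k => c * F k) = c * fsum F.
Proof. by rewrite /fsum big_distrr. Qed.

Lemma fsumB F G : fsum (fun k => F k - G k) = fsum F - fsum G.
Proof.
rewrite -[fsum G]Rmult_1_l /Rminus Ropp_mult_distr_l -fsumZ -fsumD.
by apply: eq_fsum => k; ring.
Qed.

Lemma fsum_const c : fsum (fun _ => c) = INR #|I| * c.
Proof.
rewrite /fsum big_const; elim: #|I| => [|m IH]; first by rewrite /=; ring.
by rewrite S_INR /= IH; ring.
Qed.

Lemma fsum_ge0 F : (forall k, 0 <= F k) -> 0 <= fsum F.
Proof. by move=> F_ge0; rewrite /fsum; elim/big_ind: _ => //; [lra | move=> *; lra]. Qed.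

Lemma fsum_le F G : (forall k, F k <= G k) -> fsum F <= fsum G.
Proof. by move=> FG; rewrite /fsum; elim/big_ind2: _ => //; [lra | move=> *; lra]. Qed.

Lemma fsum_ge_term F k : (forall k, 0 <= F k) -> F k <= fsum F.
Proof.
move=> F_ge0; rewrite /fsum (bigD1 k) //=.
suff : 0 <= \big[Rplus/0]_(i | i != k) F i by lra.
by elim/big_ind: _ => //; [lra | move=> *; lra].
Qed.

Lemma fsum_eq0 F : (forall k, 0 <= F k) -> fsum F = 0 -> forall k, F k = 0.
Proof. by move=> F_ge0 F0 k; have := fsum_ge_term k F_ge0; have := F_ge0 k; lra. Qed.

Lemma fdotC u v : fdot u v = fdot v u.
Proof. by apply: eq_fsum => k; ring. Qed.

Lemma fdot_ge0 u : 0 <= fdot u u.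
Proof. by apply: fsum_ge0 => k; apply: Rle_0_sqr. Qed.

Lemma fdot_lin2 a b c d u1 u2 v1 v2 :
  fdot (fun k => a * u1 k + b * u2 k) (fun k => c * v1 k + d * v2 k) =
  a * c * fdot u1 v1 + a * d * fdot u1 v2 + b * c * fdot u2 v1 + b * d * fdot u2 v2.
Proof. by rewrite /fdot -!fsumZ -!fsumD; apply: eq_fsum => k; ring. Qed.

Lemma fdot_CauchySchwarz u v : fdot u v * fdot u v <= fdot u u * fdot v v.
Proof.
have [vv0|vv_neq0] := Req_dec (fdot v v) 0.
  have v0 := fsum_eq0 (fun k => Rle_0_sqr (v k)) vv0.
  have -> : fdot u v = 0.
    rewrite /fdot -[0](Rmult_0_r (INR #|I|)) -fsum_const; apply: eq_fsum => k.
    by case: (Rmult_integral _ _ (v0 k)) => ->; ring.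
  by rewrite vv0; have := fdot_ge0 u; nra.
have vv_gt0 : 0 < fdot v v by have := fdot_ge0 v; lra.
pose s := fdot u v / fdot v v.
have uv : fdot u v = s * fdot v v by rewrite /s; field.
have := fdot_ge0 (fun k => 1 * u k + (- s) * v k).
by rewrite fdot_lin2 (fdotC v u) uv; nra.
Qed.

Lemma fnorm_ge0 u : 0 <= fnorm u.
Proof. exact: sqrt_pos. Qed.

Lemma fnorm_sqr u : fnorm u * fnorm u = fdot u u.
Proof. exact/sqrt_sqrt/fdot_ge0. Qed.

Lemma fdot_le_fnorm u v : fdot u v <= fnorm u * fnorm v.
Proof.
apply: le_of_sqr_le; first by apply: Rmult_le_pos; apply: fnorm_ge0.
have -> : fnorm u * fnorm v * (fnorm u * fnorm v) = fdot u u * fdot v v.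
  by rewrite -fnorm_sqr -(fnorm_sqr v); ring.
exact: fdot_CauchySchwarz.
Qed.

Lemma fnorm_triangle u v : fnorm (fun k => u k + v k) <= fnorm u + fnorm v.
Proof.
apply: le_of_sqr_le; first by have := fnorm_ge0 u; have := fnorm_ge0 v; lra.
have -> : fnorm (fun k => u k + v k) * fnorm (fun k => u k + v k) =
          fdot u u + 2 * fdot u v + fdot v v.
  by rewrite fnorm_sqr /fdot -fsumZ -!fsumD; apply: eq_fsum => k; ring.
by have := fdot_le_fnorm u v; rewrite -fnorm_sqr -(fnorm_sqr v); lra.
Qed.

Lemma Rabs_le_fnorm u k : Rabs (u k) <= fnorm u.
Proof.
rewrite -sqrt_Rsqr_abs; apply: sqrt_le_1_alt.
exact: (fsum_ge_term (F := fun k => u k * u k)) (fun k => Rle_0_sqr _).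
Qed.

End FinSum.

Definition vcomb3 p (c1 c2 c3 : R) (a b e : vec p) : vec p :=
  fun l => c1 * a l + c2 * b l + c3 * e l.

Section Vectors.
Variable p : nat.
Implicit Types (u v w a b e : vec p).

Lemma dotC u v : dot u v = dot v u.
Proof. exact: fdotC. Qed.

Lemma dot_ge0 u : 0 <= dot u u.
Proof. exact: fdot_ge0. Qed.

Lemma norm_ge0 u : 0 <= norm u.
Proof. exact: sqrt_pos. Qed.

Lemma norm_sqr u : norm u * norm u = dot u u.
Proof. exact: fnorm_sqr. Qed.

Lemma dot_le_norm u v : dot u v <= norm u * norm v.
Proof. exact: fdot_le_fnorm. Qed.

Lemma dotZr c u v : dot u (vscale c v) = c * dot u v.
Proof. by rewrite -fsumZ; apply: eq_fsum => l; rewrite /vscale; ring. Qed.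

Lemma dotBl u v w : dot (vsub u v) w = dot u w - dot v w.
Proof. by rewrite -fsumB; apply: eq_fsum => l; rewrite /vsub; ring. Qed.

Lemma dot_vcomb3r u c1 c2 c3 a b e :
  dot u (vcomb3 c1 c2 c3 a b e) = c1 * dot u a + c2 * dot u b + c3 * dot u e.
Proof. by rewrite -!fsumZ -!fsumD; apply: eq_fsum => l; rewrite /vcomb3; ring. Qed.

Lemma dot_vcomb3 c1 c2 c3 d1 d2 d3 a b e :
  dot (vcomb3 c1 c2 c3 a b e) (vcomb3 d1 d2 d3 a b e) =
  c1 * d1 * dot a a + (c1 * d2 + c2 * d1) * dot a b + (c1 * d3 + c3 * d1) * dot a e
  + c2 * d2 * dot b b + (c2 * d3 + c3 * d2) * dot b e + c3 * d3 * dot e e.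
Proof.
by rewrite -!fsumZ -!fsumD; apply: eq_fsum => l; rewrite /vcomb3; ring.
Qed.

Lemma normZ c u : norm (vscale c u) = Rabs c * norm u.
Proof.
rewrite /norm -sqrt_Rsqr_abs -sqrt_mult; [|exact: Rle_0_sqr|exact: dot_ge0].
by congr sqrt; rewrite /Rsqr -!fsumZ; apply: eq_fsum => l; rewrite /vscale; ring.
Qed.

Lemma norm_triangleB u v w : norm (vsub u w) <= norm (vsub u v) + norm (vsub v w).
Proof.
have -> : vsub u w = fun l => vsub u v l + vsub v w l.
  by apply: functional_extensionality => l; rewrite /vsub; ring.
exact: fnorm_triangle.
Qed.

Lemma norm_sum n (a : 'I_n -> vec p) :
  norm (fun l => \big[Rplus/0]_(i < n) a i l) <= \big[Rplus/0]_(i < n) norm (a i).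
Proof.
elim: n a => [|n IH] a.
  rewrite big_ord0 [norm _](_ : _ = fnorm (fun _ : 'I_p => 0 * 0)); last first.
    by apply: f_equal; apply: functional_extensionality => l; rewrite big_ord0; ring.
  by rewrite /fnorm /fdot /fsum big1 ?sqrt_0; [lra | move=> l _; ring].
rewrite big_ord_recr /=.
have -> : (fun l => \big[Rplus/0]_(i < n.+1) a i l) =
          (fun l => \big[Rplus/0]_(i < n) a (widen_ord (leqnSn n) i) l + a ord_max l).
  by apply: functional_extensionality => l; rewrite big_ord_recr.
exact: Rle_trans (fnorm_triangle _ _) (Rplus_le_compat_r _ _ _ (IH _)).
Qed.

End Vectors.

Definition quad_lower_bound p (F : vec p -> R) (G : vec p -> vec p) (mu : R) :=
  forall x z, F x + dot (G x) (vsub z x) + mu / 2 * dot (vsub z x) (vsub z x) <= F z.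

Definition quad_upper_bound p (F : vec p -> R) (G : vec p -> vec p) (L : R) :=
  forall x z, F z <= F x + dot (G x) (vsub z x) + L / 2 * dot (vsub z x) (vsub z x).

Lemma derivable_pt_lim_le (phi : R -> R) l A B :
  derivable_pt_lim phi 0 l ->
  (forall t, 0 < t < 1 -> (phi t - phi 0) / t <= A + t * B) -> l <= A.
Proof.
move=> dphi slope; apply: Rle_plus_epsilon => eps eps_gt0.
have [del del_phi] := dphi (eps / 2) ltac:(lra).
have del_gt0 := cond_pos del.
have B1_gt0 : 0 < Rabs B + 1 by have := Rabs_pos B; lra.
pose t := Rmin (del / 2) (Rmin (1 / 2) (eps / (2 * (Rabs B + 1)))).
have t_gt0 : 0 < t.
  by apply: Rmin_glb_lt; [lra | apply: Rmin_glb_lt; [lra | apply: Rdiv_lt_0_compat; lra]].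
have t_del : t < del.
  by rewrite /t; have := Rmin_l (del / 2) (Rmin (1 / 2) (eps / (2 * (Rabs B + 1)))); lra.
have t_lt1 : t < 1.
  by rewrite /t; have := Rmin_r (del / 2) (Rmin (1 / 2) (eps / (2 * (Rabs B + 1))));
     have := Rmin_l (1 / 2) (eps / (2 * (Rabs B + 1))); lra.
have tB_le : t * B <= eps / 2.
  have t_le : t <= eps / (2 * (Rabs B + 1)).
    by apply: Rle_trans (Rmin_r _ _) (Rmin_r _ _).
  have : t * (Rabs B + 1) <= eps / 2.
    have := Rmult_le_compat_r (Rabs B + 1) _ _ (Rlt_le _ _ B1_gt0) t_le.
    by have -> : eps / (2 * (Rabs B + 1)) * (Rabs B + 1) = eps / 2 by field; lra.
  by have := Rle_abs B; nra.
have := del_phi t (Rgt_not_eq _ _ t_gt0) ltac:(rewrite Rabs_pos_eq; lra).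
rewrite Rplus_0_l => /Rabs_def2 [_ lower].
have := slope t (conj t_gt0 t_lt1); lra.
Qed.

Lemma is_gradient_derivable p (F : vec p -> R) G x d s : is_gradient F G ->
  derivable_pt_lim (fun s => F (vadd x (vscale s d))) s (dot (G (vadd x (vscale s d))) d).
Proof.
move=> HG eps eps_gt0.
set y := vadd x (vscale s d).
have nd_ge0 := norm_ge0 d.
have [del [del_gt0 HF]] := HG y (eps / 2 / (norm d + 1)) ltac:(apply: Rdiv_lt_0_compat; lra).
have hdel : 0 < del / (norm d + 1) by apply: Rdiv_lt_0_compat; lra.
exists (mkposreal _ hdel) => h h_neq0 h_small /=.
have -> : vadd x (vscale (s + h) d) = vadd y (vscale h d).
  by apply: functional_extensionality => l; rewrite /y /vadd /vscale; ring.
have h_gt0 : 0 < Rabs h by apply: Rabs_pos_lt.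
have hd_small : norm (vscale h d) < del.
  rewrite normZ; have : Rabs h * (norm d + 1) < del.
    have := Rmult_lt_compat_r (norm d + 1) _ _ ltac:(lra) h_small.
    by have -> : del / (norm d + 1) * (norm d + 1) = del by field; lra.
  by nra.
have := HF _ hd_small; rewrite dotZr normZ.
have -> : (F (vadd y (vscale h d)) - F y) / h - dot (G y) d =
          (F (vadd y (vscale h d)) - F y - h * dot (G y) d) / h by field.
rewrite /Rdiv Rabs_mult Rabs_inv => Hle.
apply: (Rmult_lt_reg_r (Rabs h)) => //.
rewrite Rmult_assoc Rinv_l ?Rmult_1_r; last lra.
apply: Rle_lt_trans Hle _.
have -> : eps / 2 / (norm d + 1) * (Rabs h * norm d) =
          eps * Rabs h * (norm d / (norm d + 1) / 2) by field; lra.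
have : norm d / (norm d + 1) / 2 < 1.
  apply: (Rmult_lt_reg_r (2 * (norm d + 1))); first lra.
  by field_simplify; lra.
by have := Rmult_lt_0_compat _ _ eps_gt0 h_gt0; nra.
Qed.

Lemma strongly_convex_quad_lower p (F : vec p -> R) G mu :
  is_gradient F G -> strongly_convex mu F -> quad_lower_bound F G mu.
Proof.
move=> HG HF x z; set d := vsub z x.
have x0d : vadd x (vscale 0 d) = x.
  by apply: functional_extensionality => l; rewrite /vadd /vscale; ring.
have dF := is_gradient_derivable x d 0 HG; rewrite x0d in dF.
suff : dot (G x) d <= F z - F x - mu / 2 * dot d d by lra.
apply: (derivable_pt_lim_le (B := mu / 2 * dot d d) dF) => t t01; rewrite x0d.
have -> : vadd x (vscale t d) = vadd (vscale t z) (vscale (1 - t) x).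
  by apply: functional_extensionality => l; rewrite /vadd /vscale /d /vsub; ring.
have := HF z x t ltac:(lra); rewrite -/d /= Rmult_1_r norm_sqr => Hconv.
apply: (Rmult_le_reg_r t); first lra.
have -> : (F (vadd (vscale t z) (vscale (1 - t) x)) - F x) / t * t =
          F (vadd (vscale t z) (vscale (1 - t) x)) - F x by field; lra.
by nra.
Qed.

Lemma derivable_pt_lim_quadratic b c s :
  derivable_pt_lim (fun s => s * b + c * (s * s)) s (b + c * (2 * s)).
Proof.
have := derivable_pt_lim_plus _ _ s _ _
  (derivable_pt_lim_mult id (fct_cte b) s _ _ (derivable_pt_lim_id s) (derivable_pt_lim_const b s))
  (derivable_pt_lim_mult (fct_cte c) (mult_fct id id) s _ _ (derivable_pt_lim_const c s)
     (derivable_pt_lim_mult id id s _ _ (derivable_pt_lim_id s) (derivable_pt_lim_id s))).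
by have -> : 1 * b + s * 0 + (0 * (s * s) + c * (1 * s + s * 1)) = b + c * (2 * s) by ring.
Qed.

Lemma lipschitz_quad_upper p (F : vec p -> R) G L :
  is_gradient F G -> lipschitz L G -> quad_upper_bound F G L.
Proof.
move=> HG HL x z; set d := vsub z x; set N := dot d d.
(* mean value theorem for [F] along [x + s d] minus its quadratic majorant *)
pose psi s := F (vadd x (vscale s d)) - (s * dot (G x) d + L / 2 * N * (s * s)).
pose dpsi s := dot (G (vadd x (vscale s d))) d - (dot (G x) d + L / 2 * N * (2 * s)).
have psi_der s : derivable_pt_lim psi s (dpsi s).
  exact: derivable_pt_lim_minus (is_gradient_derivable x d s HG) (derivable_pt_lim_quadratic _ _ s).
have [c [psi10 c01]] := MVT_cor2 psi dpsi 0 1 Rlt_0_1 (fun c _ => psi_der c).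
have -> : z = vadd x (vscale 1 d).
  by apply: functional_extensionality => l; rewrite /vadd /vscale /d /vsub; ring.
have x0d : vadd x (vscale 0 d) = x.
  by apply: functional_extensionality => l; rewrite /vadd /vscale; ring.
suff dpsi_le0 : dpsi c <= 0 by move: psi10; rewrite /psi x0d; lra.
have xcd : vsub (vadd x (vscale c d)) x = vscale c d.
  by apply: functional_extensionality => l; rewrite /vadd /vscale /vsub; ring.
have := HL (vadd x (vscale c d)) x; rewrite xcd normZ Rabs_pos_eq; last lra.
have := dot_le_norm (vsub (G (vadd x (vscale c d))) (G x)) d; rewrite dotBl.
have := norm_ge0 d; have := norm_sqr d; rewrite /dpsi -/N.
move: (norm (vsub _ _)) (norm d) => a nd; nra.
Qed.

Lemma quad_upper_grad_eq0 p (F : vec p -> R) G L x :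
  0 < L -> quad_upper_bound F G L -> is_minimizer F x -> forall l, G x l = 0.
Proof.
move=> L_gt0 HF xmin.
have := HF x (vsub x (vscale (/ L) (G x))); have := xmin (vsub x (vscale (/ L) (G x))).
have -> : vsub (vsub x (vscale (/ L) (G x))) x = vscale (- / L) (G x).
  by apply: functional_extensionality => l; rewrite /vsub /vscale; ring.
rewrite !dotZr (dotC (vscale _ _)) dotZr.
have gg0 := dot_ge0 (G x); have iL_gt0 := Rinv_0_lt_compat _ L_gt0.
have -> : L / 2 * (- / L * (- / L * dot (G x) (G x))) = / L * dot (G x) (G x) / 2.
  by field; lra.
move=> Fmin Fup; have Gx0 : dot (G x) (G x) = 0 by nra.
by move=> l; have /Rmult_integral[] := fsum_eq0 (fun k => Rle_0_sqr (G x k)) Gx0 l.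
Qed.

Section GradientStep.
Variables (p : nat) (F : vec p -> R) (G : vec p -> vec p) (mu L : R).
Hypotheses (F_lower : quad_lower_bound F G mu) (F_upper : quad_upper_bound F G L).

Lemma quad_bounds_interpolation Lc : 0 < Lc -> L <= Lc + mu -> forall x y,
  let w := vsub (vsub (G y) (G x)) (vscale mu (vsub y x)) in
  F x + dot (G x) (vsub y x) + mu / 2 * dot (vsub y x) (vsub y x) + / (2 * Lc) * dot w w
  <= F y.
Proof.
move=> Lc_gt0 L_le x y w; set a := G x; set e := vsub y x.
(* [z] is the point used in Nesterov's proof of co-coercivity (Thm 2.1.5) *)
set s := / Lc; set z := vsub y (vscale s w).
have h1 := F_lower x z; have h2 := F_upper y z.
have Ezx : vsub z x = vcomb3 0 1 (- s) a e w.
  by apply: functional_extensionality => l; rewrite /vcomb3 /z /e /vsub /vscale; ring.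
have Ezy : vsub z y = vcomb3 0 0 (- s) a e w.
  by apply: functional_extensionality => l; rewrite /vcomb3 /z /vsub /vscale; ring.
have Egy : G y = vcomb3 1 mu 1 a e w.
  by apply: functional_extensionality => l; rewrite /vcomb3 /w /a /e /vsub /vscale; ring.
rewrite Ezx dot_vcomb3r dot_vcomb3 -/a in h1; rewrite Ezy Egy !dot_vcomb3 in h2.
have ww_ge0 := dot_ge0 w; have s_gt0 : 0 < s by apply: Rinv_0_lt_compat.
have : (L - mu) * (s * s * dot w w) <= Lc * (s * s * dot w w).
  by apply: Rmult_le_compat_r; [apply: Rmult_le_pos; nra | lra].
have -> : Lc * (s * s * dot w w) = s * dot w w by rewrite /s; field; lra.
have -> : / (2 * Lc) = s / 2 by rewrite /s; field; lra.
rewrite ?(dotC e a) ?(dotC w a) ?(dotC w e) in h1 h2; lra.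
Qed.

Lemma shifted_cocoercive Lc : 0 < Lc -> L <= Lc + mu -> forall x y,
  let w := vsub (vsub (G x) (G y)) (vscale mu (vsub x y)) in
  dot w w <= Lc * (dot (vsub (G x) (G y)) (vsub x y) - mu * dot (vsub x y) (vsub x y)).
Proof.
move=> Lc_gt0 L_le x y w.
have /= h1 := quad_bounds_interpolation Lc_gt0 L_le x y.
have /= h2 := quad_bounds_interpolation Lc_gt0 L_le y x.
rewrite -/w in h2; move: h1 h2.
set a := G x; set b := G y; set d := vsub x y.
have -> : vsub y x = vcomb3 0 0 (-1) a b d.
  by apply: functional_extensionality => l; rewrite /vcomb3 /d /vsub; ring.
have -> : vsub (vsub b a) (vscale mu (vcomb3 0 0 (-1) a b d)) = vcomb3 (-1) 1 mu a b d.
  by apply: functional_extensionality => l; rewrite /vcomb3 /vsub /vscale; ring.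
have -> : w = vcomb3 1 (-1) (- mu) a b d.
  by apply: functional_extensionality => l; rewrite /vcomb3 /w /a /b /d /vsub /vscale; ring.
have -> : vsub a b = vcomb3 1 (-1) 0 a b d.
  by apply: functional_extensionality => l; rewrite /vcomb3 /vsub; ring.
move=> h1 h2; apply: (Rmult_le_reg_l (/ Lc)); first exact: Rinv_0_lt_compat.
rewrite -Rmult_assoc Rinv_l ?Rmult_1_l; last lra.
have half_inv : / (2 * Lc) = / Lc / 2 by field; lra.
rewrite [dot (vcomb3 _ _ _ _ _ _) d]dotC half_inv !dot_vcomb3 !dot_vcomb3r in h1 h2 *.
by rewrite ?(dotC b d) ?(dotC a d) in h1 h2 *; lra.
Qed.

Lemma cocoercive : mu <= L -> forall x y,
  dot (vsub (G x) (G y)) (vsub (G x) (G y)) + mu * L * dot (vsub x y) (vsub x y)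
  <= (mu + L) * dot (vsub (G x) (G y)) (vsub x y).
Proof.
move=> mu_le_L x y; set u := vsub (G x) (G y); set d := vsub x y.
(* let [Lc] decrease to [L - mu], which may be [0] *)
suff : dot u u - 2 * mu * dot u d + mu * mu * dot d d <= (L - mu) * (dot u d - mu * dot d d).
  by lra.
apply: (le_of_le_add_mul (c := dot u d - mu * dot d d)) => eps eps_gt0.
have /= := shifted_cocoercive (Lc := L - mu + eps) ltac:(lra) ltac:(lra) x y.
have -> : vsub (vsub (G x) (G y)) (vscale mu (vsub x y)) = vcomb3 1 (- mu) 0 u d d.
  by apply: functional_extensionality => l; rewrite /vcomb3 /u /d /vsub /vscale; ring.
rewrite dot_vcomb3 -/u -/d; lra.
Qed.

Lemma quad_bounds_degenerate : L < mu -> forall v : vec p, dot v v = 0.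
Proof.
move=> L_lt_mu v; have := F_lower v (vadd v v); have := F_upper v (vadd v v).
have -> : vsub (vadd v v) v = v.
  by apply: functional_extensionality => l; rewrite /vadd /vsub; ring.
by have := dot_ge0 v; nra.
Qed.

Lemma gradient_step_contraction alpha :
  0 < mu -> 0 < L -> 0 < alpha -> alpha <= 2 / (mu + L) -> forall x y,
  let T z := vsub z (vscale alpha (G z)) in
  dot (vsub (T x) (T y)) (vsub (T x) (T y))
  <= (1 - 2 * alpha * mu * L / (mu + L)) * dot (vsub x y) (vsub x y).
Proof.
move=> mu_gt0 L_gt0 alpha_gt0 alpha_le x y T.
have [mu_le_L|L_lt_mu] := Rle_lt_dec mu L; last by rewrite !quad_bounds_degenerate //; lra.
have coco := cocoercive mu_le_L x y.
set u := vsub (G x) (G y) in coco; set d := vsub x y in coco *.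
have -> : vsub (T x) (T y) = vcomb3 1 (- alpha) 0 d u u.
  by apply: functional_extensionality => l; rewrite /vcomb3 /T /u /d /vsub /vscale; ring.
rewrite dot_vcomb3; rewrite (dotC u d) in coco.
have alpha_muL : alpha * (mu + L) <= 2.
  have := Rmult_le_compat_r (mu + L) _ _ ltac:(lra) alpha_le.
  by have -> : 2 / (mu + L) * (mu + L) = 2 by field; lra.
have alphaQ := Rmult_le_compat_l (alpha * dot u u) _ _ ltac:(have := dot_ge0 u; nra) alpha_muL.
have alpha_coco := Rmult_le_compat_l (2 * alpha) _ _ ltac:(lra) coco.
apply: (Rmult_le_reg_r (mu + L)); first lra.
have -> : (1 - 2 * alpha * mu * L / (mu + L)) * dot d d * (mu + L) =
          (mu + L) * dot d d - 2 * alpha * mu * L * dot d d by field; lra.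
lra.
Qed.

Lemma gradient_step_contraction_inv alpha :
  0 < mu -> 0 < L -> 0 < alpha -> alpha <= 1 / L -> forall x y,
  let T z := vsub z (vscale alpha (G z)) in
  dot (vsub (T x) (T y)) (vsub (T x) (T y))
  <= (1 - 2 * alpha * mu * L / (mu + L)) * dot (vsub x y) (vsub x y).
Proof.
move=> mu_gt0 L_gt0 alpha_gt0 alpha_le x y.
have [mu_le_L|L_lt_mu] := Rle_lt_dec mu L; last by rewrite /= !quad_bounds_degenerate //; lra.
apply: gradient_step_contraction => //; apply: Rle_trans alpha_le _.
apply: (Rmult_le_reg_r (L * (mu + L))); first nra.
have -> : 1 / L * (L * (mu + L)) = mu + L by field; lra.
have -> : 2 / (mu + L) * (L * (mu + L)) = 2 * L by field; lra.
lra.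
Qed.

End GradientStep.

Lemma fsum_sqr_le n (w : 'I_n -> R) : fsum w * fsum w <= INR n * fdot w w.
Proof.
have := fdot_CauchySchwarz (fun _ : 'I_n => 1) w.
have -> : fdot (fun _ : 'I_n => 1) w = fsum w by apply: eq_fsum => k; ring.
have -> : fdot (fun _ : 'I_n => 1) (fun _ => 1) = INR n by rewrite /fdot fsum_const card_ord; ring.
by [].
Qed.

Definition mulmv n (A : mat n) (w : 'I_n -> R) : 'I_n -> R :=
  fun i => \big[Rplus/0]_(j < n) (A i j * w j).

Section MixingMatrices.
Variable n : nat.
Implicit Types (A B W : mat n) (w v : 'I_n -> R).

Lemma mulmv_mmul A B w : mulmv (mmul A B) w = mulmv A (mulmv B w).
Proof.
apply: functional_extensionality => i; rewrite /mulmv /mmul.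
under eq_bigr do rewrite big_distrl.
rewrite exchange_big /=; apply: eq_bigr => k _.
by rewrite big_distrr /=; apply: eq_bigr => j _; ring.
Qed.

Lemma mulmv_mid w : mulmv (@mid n) w = w.
Proof.
apply: functional_extensionality => i; rewrite /mulmv /mid (bigD1 i) //= eqxx big1; first ring.
by move=> j /negPf; rewrite eq_sym => ->; ring.
Qed.

Lemma mulmv_lin2 A a b w v :
  mulmv A (fun i => a * w i + b * v i) = fun i => a * mulmv A w i + b * mulmv A v i.
Proof.
apply: functional_extensionality => i; rewrite /mulmv !big_distrr /= -big_split /=.
by apply: eq_bigr => j _; ring.
Qed.

Lemma fsum_mulmv A w : (forall j, \big[Rplus/0]_(i < n) A i j = 1) -> fsum (mulmv A w) = fsum w.
Proof.
move=> A_col; rewrite /fsum /mulmv exchange_big /=; apply: eq_bigr => j _.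
by rewrite -big_distrl /= A_col; ring.
Qed.

Lemma mulmv_const A c :
  (forall i, \big[Rplus/0]_(j < n) A i j = 1) -> mulmv A (fun _ => c) = fun _ => c.
Proof.
by move=> A_row; apply: functional_extensionality => i; rewrite /mulmv -big_distrl /= A_row; ring.
Qed.

Lemma doubly_stochastic_mpow W t : doubly_stochastic W -> doubly_stochastic (mpow W t).
Proof.
move=> [W_ge0 [W_row W_col]]; elim: t => [|t [IH_ge0 [IH_row IH_col]]] /=.
  split; first by move=> i j; rewrite /mid; case: (i == j); lra.
  split=> [i|j]; rewrite /mid.
    by rewrite (bigD1 i) //= eqxx big1 => [|j /negPf]; [ring | rewrite eq_sym => ->].
  by rewrite (bigD1 j) //= eqxx big1 => [|i /negPf ->]; ring.
split; first by move=> i j; apply: fsum_ge0 => k; apply: Rmult_le_pos.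
split=> [i|j]; rewrite /mmul exchange_big /=.
  by rewrite -(W_row i); apply: eq_bigr => k _; rewrite -big_distrr /= IH_row; ring.
by rewrite -(IH_col j); apply: eq_bigr => k _; rewrite -big_distrl /= W_col; ring.
Qed.

Lemma fdot_mulmv_le A w : doubly_stochastic A -> fdot (mulmv A w) (mulmv A w) <= fdot w w.
Proof.
move=> [A_ge0 [A_row A_col]].
(* Jensen: each row of [A] is a probability vector *)
have row_le i : mulmv A w i * mulmv A w i <= fsum (fun j => A i j * (w j * w j)).
  set m := mulmv A w i.
  have m_def : fsum (fun j => A i j * w j) = m by [].
  clearbody m.
  have : 0 <= fsum (fun j => A i j * ((w j - m) * (w j - m))).
    by apply: fsum_ge0 => j; apply: Rmult_le_pos; [|apply: Rle_0_sqr].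
  have -> : fsum (fun j => A i j * ((w j - m) * (w j - m))) =
            fsum (fun j => A i j * (w j * w j)) - 2 * m * fsum (fun j => A i j * w j)
            + m * m * fsum (fun j => A i j).
    by rewrite -!fsumZ -fsumB -fsumD; apply: eq_fsum => j; ring.
  by rewrite [fsum (fun j => A i j)]A_row m_def => H; lra.
apply: Rle_trans (fsum_le row_le) _.
rewrite /fsum exchange_big /=; apply: Req_le; apply: eq_bigr => j _.
by rewrite -big_distrl /= A_col; ring.
Qed.

Lemma fdot_mulmvC A u v : (forall i j, A i j = A j i) -> fdot (mulmv A u) v = fdot u (mulmv A v).
Proof.
move=> A_sym; rewrite /fdot /fsum /mulmv.
under eq_bigr do rewrite big_distrl.
rewrite exchange_big /=; apply: eq_bigr => j _.
by rewrite big_distrr /=; apply: eq_bigr => i _; rewrite A_sym; ring.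
Qed.

End MixingMatrices.

Section RowMatrices.
Local Open Scope ring_scope.
Definition mx_tr n (A : mat n) : 'M[R]_n := \matrix_(i, k) A k i.
Definition row_of n (w : 'I_n -> R) : 'rV[R]_n := \row_k w k.
End RowMatrices.

Lemma row_mul_mx_tr n (A : mat n) (w : 'I_n -> R) j :
  (mulmx (row_of w) (mx_tr A)) ord0 j = mulmv A w j.
Proof. by rewrite !mxE; apply: eq_bigr => i _; rewrite !mxE Rmult_comm. Qed.

Lemma Rabs_big_le n (a : 'I_n -> R) :
  Rabs (\big[Rplus/0]_(j < n) a j) <= \big[Rplus/0]_(j < n) Rabs (a j).
Proof.
elim/big_ind2: _ => [|x1 x2 y1 y2 h1 h2|j _]; [rewrite Rabs_R0 | have := Rabs_triang x2 y2 |]; lra.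
Qed.

Lemma mulmv_kernel n (A : mat n) :
  (forall eps, 0 < eps -> exists w, fdot w w = 1 /\ fdot (mulmv A w) (mulmv A w) < eps) ->
  exists v : 'I_n -> R, (exists i, v i <> 0) /\ forall i, mulmv A v i = 0.
Proof.
move=> small.
have [/det0P [r r_neq0 rA0]|det_neq0] := boolP (determinant (mx_tr A) == GRing.zero).
  exists (fun i => r ord0 i); split.
    apply: NNPP => r0; move/negP: r_neq0; apply; apply/eqP/matrixP => a b.
    by rewrite (ord1 a) mxE; apply: NNPP => rb; apply: r0; exists b.
  move=> i; rewrite -row_mul_mx_tr.
  suff -> : row_of (fun i => r ord0 i) = r by rewrite rA0 mxE.
  by apply/matrixP => a b; rewrite (ord1 a) mxE.
have A_unit : mx_tr A \in unitmx by rewrite unitmxE GRing.unitfE.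
exfalso.
set B := invmx (mx_tr A).
pose K i := \big[Rplus/0]_(j < n) Rabs (B j i).
pose K2 := fsum (fun i => K i * K i).
have K2_ge0 : 0 <= K2 by apply: fsum_ge0 => i; apply: Rle_0_sqr.
have [w [w1 Aw_small]] := small (/ (K2 + 1)) ltac:(apply: Rinv_0_lt_compat; lra).
set u := mulmv A w.
have w_eq i : w i = \big[Rplus/0]_(j < n) (u j * B j i).
  have /matrixP /(_ ord0 i) wBA := mulmxK A_unit (row_of w).
  have -> : w i = row_of w ord0 i by rewrite mxE.
  by rewrite -wBA mxE; apply: eq_bigr => j _; rewrite row_mul_mx_tr.
have w_le i : w i * w i <= fdot u u * (K i * K i).
  have abs_le : Rabs (w i) <= fnorm u * K i.
    rewrite w_eq; apply: Rle_trans (Rabs_big_le _) _.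
    rewrite /K big_distrr /=; apply: (fsum_le (I := 'I_n)) => j.
    by rewrite Rabs_mult; apply: Rmult_le_compat_r; [apply: Rabs_pos | apply: Rabs_le_fnorm].
  rewrite -fnorm_sqr; have := Rsqr_abs (w i); rewrite /Rsqr.
  by have := Rabs_pos (w i); have := fnorm_ge0 u; move: abs_le; nra.
have : 1 <= fdot u u * K2.
  by rewrite -w1 /K2 -fsumZ; exact: (fsum_le (F := fun k => w k * w k) w_le).
have : fdot u u * K2 <= / (K2 + 1) * K2 by apply: Rmult_le_compat_r => //; exact: Rlt_le.
have : / (K2 + 1) * K2 < 1.
  apply: (Rmult_lt_reg_r (K2 + 1)); first lra.
  have -> : / (K2 + 1) * K2 * (K2 + 1) = K2 by field; lra.
  lra.
lra.
Qed.

Section SpectralGap.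
Variables (n : nat) (W : mat n) (beta : R).
Hypotheses (W_sym : sym_mat W) (W_ds : doubly_stochastic W) (W_eig1 : simple_eig1 W)
  (W_eig : forall lam, is_eigenvalue W lam -> lam <> 1 -> Rabs lam <= beta)
  (n_gt0 : (0 < n)%nat).

Let n_pos : 0 < INR n. Proof. exact/lt_0_INR/ltP. Qed.

(* the quadratic form of [W^2 - J/n], with [J] the all-ones matrix *)
Definition rayleigh (w : 'I_n -> R) := fdot (mulmv W w) (mulmv W w) - fsum w * fsum w / INR n.

Lemma rayleigh_le w : rayleigh w <= fdot w w.
Proof.
rewrite /rayleigh; have := fdot_mulmv_le w W_ds.
suff : 0 <= fsum w * fsum w / INR n by lra.
by apply: Rmult_le_pos; [apply: Rle_0_sqr | apply/Rlt_le/Rinv_0_lt_compat].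
Qed.

Lemma rayleigh_ge w : - fdot w w <= rayleigh w.
Proof.
rewrite /rayleigh; have := fdot_ge0 (mulmv W w).
suff : fsum w * fsum w / INR n <= fdot w w by lra.
apply: (Rmult_le_reg_r (INR n)) => //.
have -> : fsum w * fsum w / INR n * INR n = fsum w * fsum w by field; lra.
by rewrite Rmult_comm; apply: fsum_sqr_le.
Qed.

Lemma rayleighZ c w : rayleigh (fun i => c * w i) = c * c * rayleigh w.
Proof.
rewrite /rayleigh fsumZ.
have -> : mulmv W (fun i => c * w i) = fun i => c * mulmv W w i + 0 * mulmv W w i.
  by rewrite -mulmv_lin2; congr mulmv; apply: functional_extensionality => i; ring.
rewrite fdot_lin2; field; lra.
Qed.

Let i0 : 'I_n := Ordinal n_gt0.

Definition rayleigh_value r := exists w, fdot w w = 1 /\ r = rayleigh w.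

Lemma rayleigh_value_bound : bound rayleigh_value.
Proof. by exists 1 => r [w [w1 ->]]; have := rayleigh_le w; lra. Qed.

Lemma rayleigh_value_ex : exists r, rayleigh_value r.
Proof.
exists (rayleigh (fun i => if i == i0 then 1 else 0)); eexists; split; last reflexivity.
by rewrite /fdot /fsum (bigD1 i0) //= ?eqxx big1 => [|j /negPf ->]; ring.
Qed.

Definition rayleigh_sup :=
  proj1_sig (completeness rayleigh_value rayleigh_value_bound rayleigh_value_ex).

Lemma rayleigh_sup_lub : is_lub rayleigh_value rayleigh_sup.
Proof. exact: proj2_sig (completeness rayleigh_value rayleigh_value_bound rayleigh_value_ex). Qed.

Lemma rayleigh_le_sup w : rayleigh w <= rayleigh_sup * fdot w w.
Proof.
have [sup_ub _] := rayleigh_sup_lub.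
have [ww0|ww_neq0] := Req_dec (fdot w w) 0.
  have w0 := fsum_eq0 (fun k => Rle_0_sqr (w k)) ww0.
  have -> : w = fun i => 0 * w i.
    by apply: functional_extensionality => i; case: (Rmult_integral _ _ (w0 i)) => ->; ring.
  have -> : fdot (fun i => 0 * w i) (fun i => 0 * w i) = 0 * 0 * fdot w w.
    by rewrite -fsumZ; apply: eq_fsum => k; ring.
  by rewrite rayleighZ ww0; lra.
have ww_gt0 : 0 < fdot w w by have := fdot_ge0 w; lra.
pose s := / sqrt (fdot w w).
have ss : s * s = / fdot w w by rewrite /s -Rinv_mult sqrt_sqrt //; lra.
have sw1 : fdot (fun i => s * w i) (fun i => s * w i) = 1.
  have -> : fdot (fun i => s * w i) (fun i => s * w i) = s * s * fdot w w.
    by rewrite -fsumZ; apply: eq_fsum => k; ring.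
  by rewrite ss; field; lra.
have := sup_ub _ (ex_intro _ _ (conj sw1 erefl)); rewrite rayleighZ ss => H.
have := Rmult_le_compat_r (fdot w w) _ _ (Rlt_le _ _ ww_gt0) H.
by have -> : / fdot w w * rayleigh w * fdot w w = rayleigh w by field; lra.
Qed.

Lemma rayleigh_sup_approx eps :
  0 < eps -> exists w, fdot w w = 1 /\ rayleigh_sup - eps < rayleigh w.
Proof.
move=> eps_gt0; apply: NNPP => no_w.
have [_ sup_least] := rayleigh_sup_lub.
suff : rayleigh_sup <= rayleigh_sup - eps by lra.
apply: sup_least => r [w [w1 ->]]; apply: Rnot_lt_le => lt_w.
by apply: no_w; exists w.
Qed.

Definition gap_mx : mat n :=
  fun i j => (if i == j then rayleigh_sup else 0) - mmul W W i j + / INR n.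

Lemma mulmv_gap_mx w :
  mulmv gap_mx w = fun i => rayleigh_sup * w i - mulmv W (mulmv W w) i + fsum w / INR n.
Proof.
apply: functional_extensionality => i; rewrite -mulmv_mmul.
have diag : fsum (fun j => (if i == j then rayleigh_sup else 0) * w j) = rayleigh_sup * w i.
  by rewrite /fsum (bigD1 i) //= ?eqxx big1 => [|j /negPf]; [ring | rewrite eq_sym => ->; ring].
rewrite -diag /Rdiv Rmult_comm -fsumZ -fsumB -fsumD.
by apply: eq_fsum => j; rewrite /gap_mx; ring.
Qed.

Lemma gap_mx_sym i j : gap_mx i j = gap_mx j i.
Proof.
rewrite /gap_mx /mmul eq_sym; congr (_ - _ + _).
by apply: eq_bigr => k _; rewrite (W_sym i k) (W_sym k j); ring.
Qed.

Lemma fdot_gap_mx w : fdot (mulmv gap_mx w) w = rayleigh_sup * fdot w w - rayleigh w.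
Proof.
rewrite mulmv_gap_mx /rayleigh.
have -> : fdot (fun i => rayleigh_sup * w i - mulmv W (mulmv W w) i + fsum w / INR n) w =
          rayleigh_sup * fdot w w - fdot (mulmv W (mulmv W w)) w + fsum w / INR n * fsum w.
  by rewrite /fdot -!fsumZ -fsumB -fsumD; apply: eq_fsum => k; ring.
by rewrite (fdot_mulmvC _ _ W_sym) /Rdiv; ring.
Qed.

Lemma gap_mx_psd w : 0 <= fdot (mulmv gap_mx w) w.
Proof. by rewrite fdot_gap_mx; have := rayleigh_le_sup w; lra. Qed.

Lemma gap_mx_sqr_le w :
  fdot (mulmv gap_mx w) (mulmv gap_mx w) <= (Rabs rayleigh_sup + 1) * fdot (mulmv gap_mx w) w.
Proof.
set c := Rabs rayleigh_sup + 1.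
have c_gt0 : 0 < c by have := Rabs_pos rayleigh_sup; rewrite /c; lra.
set z := mulmv gap_mx w.
have z_le : fdot (mulmv gap_mx z) z <= c * fdot z z.
  rewrite fdot_gap_mx; have := rayleigh_ge z; have := fdot_ge0 z.
  by have := Rle_abs rayleigh_sup; rewrite /c; nra.
(* positivity of the form at [w - z / c] *)
have := gap_mx_psd (fun i => 1 * w i + (- / c) * z i).
rewrite mulmv_lin2 fdot_lin2 -/z (fdot_mulmvC z w gap_mx_sym) -/z.
have ic_gt0 : 0 < / c by apply: Rinv_0_lt_compat.
have := Rmult_le_compat_l (/ c * / c) _ _ ltac:(nra) z_le.
have -> : / c * / c * (c * fdot z z) = / c * fdot z z by field; lra.
rewrite (fdotC z w) => H1 H2.
have := Rmult_le_compat_l c 0 (fdot w z - / c * fdot z z) (Rlt_le _ _ c_gt0) ltac:(lra).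
have -> : c * (fdot w z - / c * fdot z z) = c * fdot w z - fdot z z by field; lra.
lra.
Qed.

Lemma gap_mx_singular :
  exists v : 'I_n -> R, (exists i, v i <> 0) /\ forall i, mulmv gap_mx v i = 0.
Proof.
have c_gt0 : 0 < Rabs rayleigh_sup + 1 by have := Rabs_pos rayleigh_sup; lra.
apply: mulmv_kernel => eps eps_gt0.
have [w [w1 w_near]] := @rayleigh_sup_approx (eps / (Rabs rayleigh_sup + 1))
                          ltac:(apply: Rdiv_lt_0_compat; lra).
exists w; split => //; apply: Rle_lt_trans (gap_mx_sqr_le w) _.
rewrite fdot_gap_mx w1.
have -> : eps = (Rabs rayleigh_sup + 1) * (eps / (Rabs rayleigh_sup + 1)) by field; lra.
by apply: Rmult_lt_compat_l; lra.
Qed.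

Lemma sum0_eigvec_sqr_le r v : 0 < r -> (exists i, v i <> 0) -> fsum v = 0 ->
  (forall j, mulmv W (mulmv W v) j = r * r * v j) -> r <= beta.
Proof.
move=> r_gt0 [i vi_neq0] v_sum0 WWv.
have W_col : forall j, \big[Rplus/0]_(i < n) W i j = 1 by case: W_ds => _ [].
(* either [W v + r v] is an eigenvector for [r], or it vanishes and [v] is one for [- r] *)
set wv := fun i => mulmv W v i + r * v i.
have W_wv j : \big[Rplus/0]_(k < n) (W j k * wv k) = r * wv j.
  change (mulmv W wv j = r * wv j).
  rewrite (_ : wv = fun i => 1 * mulmv W v i + r * v i); last first.
    by apply: functional_extensionality => k; rewrite /wv; ring.
  by rewrite mulmv_lin2 WWv /wv; ring.
have [[k wvk_neq0]|wv0] := classic (exists i, wv i <> 0).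
  have r_neq1 : r <> 1.
    move=> r1; have [c wv_c] := W_eig1 (v := wv) ltac:(by move=> j; rewrite W_wv r1; ring).
    have : fsum wv = INR n * c by rewrite (eq_fsum wv_c) fsum_const card_ord.
    rewrite /wv fsumD fsumZ fsum_mulmv // v_sum0 => sum_wv.
    have /Rmult_integral [|c0] : INR n * c = 0 by lra.
      by lra.
    by apply: wvk_neq0; rewrite wv_c c0.
  have := W_eig (ex_intro _ wv (conj (ex_intro _ k wvk_neq0) W_wv)) r_neq1.
  by rewrite Rabs_pos_eq; lra.
have W_v j : \big[Rplus/0]_(k < n) (W j k * v k) = - r * v j.
  have wvj : wv j = 0 by apply: NNPP => wvj; apply: wv0; exists j.
  by move: wvj; rewrite /wv /mulmv; lra.
have := W_eig (ex_intro _ v (conj (ex_intro _ i vi_neq0) W_v)) ltac:(lra).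
by rewrite Rabs_Ropp Rabs_pos_eq; lra.
Qed.

Lemma rayleigh_sup_le : rayleigh_sup <= beta ^ 2.
Proof.
apply: Rnot_lt_le => beta_lt; have sup_gt0 : 0 < rayleigh_sup by have := pow2_ge_0 beta; lra.
have [v [v_neq0 v_ker]] := gap_mx_singular; rewrite mulmv_gap_mx in v_ker.
have W_col : forall j, \big[Rplus/0]_(i < n) W i j = 1 by case: W_ds => _ [].
have v_sum0 : fsum v = 0.
  have : fsum (fun i => rayleigh_sup * v i - mulmv W (mulmv W v) i + fsum v / INR n) = 0.
    by rewrite /fsum big1 // => j _; apply: v_ker.
  rewrite fsumD fsumB fsumZ fsum_const card_ord !fsum_mulmv //.
  have -> : INR n * (fsum v / INR n) = fsum v by field; lra.
  move=> sum0; have : rayleigh_sup * fsum v = 0 by lra.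
  by case/Rmult_integral; lra.
have rr : sqrt rayleigh_sup * sqrt rayleigh_sup = rayleigh_sup by apply: sqrt_sqrt; lra.
have r_gt0 : 0 < sqrt rayleigh_sup by apply: sqrt_lt_R0.
have : sqrt rayleigh_sup <= beta.
  apply: (sum0_eigvec_sqr_le r_gt0 v_neq0 v_sum0) => j.
  by have := v_ker j; rewrite v_sum0 rr /Rdiv Rmult_0_l; lra.
move=> r_le; have := Rmult_le_compat _ _ _ _ (Rlt_le _ _ r_gt0) (Rlt_le _ _ r_gt0) r_le r_le.
by rewrite rr /=; lra.
Qed.

Lemma mulmv_sum0_le w : fsum w = 0 -> fdot (mulmv W w) (mulmv W w) <= beta ^ 2 * fdot w w.
Proof.
move=> w_sum0; have := rayleigh_le_sup w; rewrite /rayleigh w_sum0.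
have -> : 0 * 0 / INR n = 0 by field; lra.
by have := rayleigh_sup_le; have := fdot_ge0 w; nra.
Qed.

End SpectralGap.

Section Stacked.
Variables (n p : nat).
Implicit Types (z a b : 'I_n -> vec p).

Definition coord z (l : 'I_p) : 'I_n -> R := fun i => z i l.
Definition ssq z := fsum (fun i => dot (z i) (z i)).
Definition vmean z : vec p := fun l => fsum (coord z l) / INR n.
Definition vdev z : 'I_n -> vec p := fun i l => z i l - vmean z l.
Definition mix (A : mat n) z : 'I_n -> vec p := fun i l => mulmv A (coord z l) i.

Lemma ssq_coord z : ssq z = fsum (fun l => fdot (coord z l) (coord z l)).
Proof. exact: exchange_big. Qed.

Lemma ssq_ge0 z : 0 <= ssq z.
Proof. by apply: fsum_ge0 => i; apply: dot_ge0. Qed.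

Lemma snorm_ge0 z : 0 <= snorm z.
Proof. exact: sqrt_pos. Qed.

Lemma snorm_le z1 z2 : ssq z1 <= ssq z2 -> snorm z1 <= snorm z2.
Proof. exact: sqrt_le_1_alt. Qed.

Lemma snorm_fnorm z : snorm z = fnorm (fun il : 'I_n * 'I_p => z il.1 il.2).
Proof. by rewrite /snorm /fnorm /fdot /fsum pair_bigA. Qed.

Lemma snorm_triangle a b : snorm (fun i => vadd (a i) (b i)) <= snorm a + snorm b.
Proof. by rewrite !snorm_fnorm; apply: fnorm_triangle. Qed.

Lemma snorm_triangleB a b : snorm (fun i => vsub (a i) (b i)) <= snorm a + snorm b.
Proof.
have -> : (fun i => vsub (a i) (b i)) = fun i => vadd (a i) (vscale (-1) (b i)).
  by apply: functional_extensionality => i; apply: functional_extensionality => l;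
     rewrite /vsub /vadd /vscale; ring.
apply: Rle_trans (snorm_triangle _ _) _.
suff -> : snorm (fun i => vscale (-1) (b i)) = snorm b by lra.
by congr sqrt; apply: eq_bigr => i _; apply: eq_fsum => l; rewrite /vscale; ring.
Qed.

Lemma norm_le_snorm z i : norm (z i) <= snorm z.
Proof. exact/sqrt_le_1_alt/(fsum_ge_term (F := fun i => dot (z i) (z i)))/(fun k => dot_ge0 _). Qed.

Lemma ssq_mix_le A z : doubly_stochastic A -> ssq (mix A z) <= ssq z.
Proof. by move=> A_ds; rewrite !ssq_coord; apply: fsum_le => l; apply: fdot_mulmv_le. Qed.

Lemma vmean_mix A z : doubly_stochastic A -> vmean (mix A z) = vmean z.
Proof.
case=> _ [_ A_col]; apply: functional_extensionality => l.
by rewrite /vmean [fsum (coord (mix A z) l)]fsum_mulmv.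
Qed.

Hypothesis n_gt0 : (0 < n)%nat.

Lemma fsum_coord_vdev z l : fsum (coord (vdev z) l) = 0.
Proof.
have n_pos : 0 < INR n by apply/lt_0_INR/ltP.
rewrite /vdev /coord fsumB fsum_const card_ord /vmean /coord.
(* [set] merges two copies of the sum that differ only in a hidden [finType] instance *)
set a := fsum _; field; lra.
Qed.

Lemma ssq_vdev_le z : ssq (vdev z) <= ssq z.
Proof.
have n_pos : 0 < INR n by apply/lt_0_INR/ltP.
rewrite !ssq_coord; apply: fsum_le => l.
set m := vmean z l; have m_def : m = fsum (coord z l) / INR n by [].
have -> : fdot (coord (vdev z) l) (coord (vdev z) l) =
          fdot (coord z l) (coord z l) - 2 * m * fsum (coord z l) + fsum (fun _ : 'I_n => m * m).
  by rewrite /fdot -fsumZ -fsumB -fsumD; apply: eq_fsum => k; rewrite /coord /vdev -/m; ring.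
rewrite fsum_const card_ord m_def.
have : 0 <= fsum (coord z l) * fsum (coord z l) / INR n.
  by apply: Rmult_le_pos; [apply: Rle_0_sqr | apply/Rlt_le/Rinv_0_lt_compat].
have -> : INR n * (fsum (coord z l) / INR n * (fsum (coord z l) / INR n)) =
          fsum (coord z l) * fsum (coord z l) / INR n by field; lra.
lra.
Qed.

Section Consensus.
Variables (W : mat n) (beta : R).
Hypotheses (W_sym : sym_mat W) (W_ds : doubly_stochastic W) (W_eig1 : simple_eig1 W)
  (W_eig : forall lam, is_eigenvalue W lam -> lam <> 1 -> Rabs lam <= beta).

Lemma ssq_vdev_mix_mpow t z : ssq (vdev (mix (mpow W t) z)) <= (beta ^ 2) ^ t * ssq (vdev z).
Proof.
have Wt_ds := doubly_stochastic_mpow t W_ds.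
rewrite !ssq_coord -fsumZ; apply: fsum_le => l.
have -> : coord (vdev (mix (mpow W t) z)) l = mulmv (mpow W t) (coord (vdev z) l).
  rewrite /vdev vmean_mix //.
  have -> : coord (fun i l => z i l - vmean z l) l = fun i => 1 * coord z l i + (- vmean z l) * 1.
    by apply: functional_extensionality => i; rewrite /coord; ring.
  rewrite (mulmv_lin2 _ _ _ _ (fun _ => 1)) mulmv_const; last by case: Wt_ds => _ [].
  by apply: functional_extensionality => i; rewrite /mix /coord; ring.
move: (coord (vdev z) l) (fsum_coord_vdev z l) => w; elim: t {Wt_ds} => [|t IH] w_sum0 /=.
  by rewrite mulmv_mid; lra.
rewrite mulmv_mmul; apply: Rle_trans (mulmv_sum0_le W_sym W_ds W_eig1 W_eig n_gt0 _) _.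
  by rewrite fsum_mulmv //; case: (doubly_stochastic_mpow t W_ds) => _ [].
by rewrite Rmult_assoc; apply: Rmult_le_compat_l; [apply: pow2_ge_0 | apply: IH].
Qed.

End Consensus.
End Stacked.

Lemma foldr_Rmax_ge (x0 : R) s y : y \in x0 :: s -> y <= foldr Rmax x0 s.
Proof.
elim: s y => [|x s IH] y /=; first by rewrite inE => /eqP ->; lra.
rewrite !inE => /orP [/eqP ->|/orP [/eqP ->|ys]]; last 2 first.
- exact: Rmax_l.
- by apply: Rle_trans (Rmax_r _ _); apply: IH; rewrite inE ys orbT.
by apply: Rle_trans (Rmax_r _ _); apply: IH; rewrite inE eqxx.
Qed.

Lemma foldr_Rmin_le (x0 : R) s y : y \in x0 :: s -> foldr Rmin x0 s <= y.
Proof.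
elim: s y => [|x s IH] y /=; first by rewrite inE => /eqP ->; lra.
rewrite !inE => /orP [/eqP ->|/orP [/eqP ->|ys]]; last 2 first.
- exact: Rmin_l.
- by apply: Rle_trans (Rmin_r _ _) _; apply: IH; rewrite inE ys orbT.
by apply: Rle_trans (Rmin_r _ _) _; apply: IH; rewrite inE eqxx.
Qed.

Lemma foldr_Rmin_gt0 (x0 : R) s : 0 < x0 -> (forall y, y \in s -> 0 < y) -> 0 < foldr Rmin x0 s.
Proof.
move=> x0_gt0; elim: s => [|x s IH] //= s_gt0.
apply: Rmin_glb_lt; first by apply: s_gt0; rewrite inE eqxx.
by apply: IH => y ys; apply: s_gt0; rewrite inE ys orbT.
Qed.

Lemma maxI_ge n (F : 'I_n -> R) i : F i <= maxI F.
Proof.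
rewrite /maxI; have : F i \in [seq F j | j <- enum 'I_n] by apply: map_f; rewrite mem_enum.
by case: [seq F j | j <- enum 'I_n] => [//|a s]; apply: foldr_Rmax_ge.
Qed.

Lemma minI_le n (F : 'I_n -> R) i : minI F <= F i.
Proof.
rewrite /minI; have : F i \in [seq F j | j <- enum 'I_n] by apply: map_f; rewrite mem_enum.
by case: [seq F j | j <- enum 'I_n] => [//|a s]; apply: foldr_Rmin_le.
Qed.

Lemma minI_gt0 n (F : 'I_n -> R) : (0 < n)%nat -> (forall i, 0 < F i) -> 0 < minI F.
Proof.
move=> n_gt0 F_gt0; rewrite /minI.
have : forall y, y \in [seq F j | j <- enum 'I_n] -> 0 < y by move=> y /mapP [j _ ->].
have : [seq F j | j <- enum 'I_n] <> [::].
  by move/(congr1 size); rewrite size_map size_enum_ord => n0; move: n_gt0; rewrite n0.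
case: [seq F j | j <- enum 'I_n] => [//|a s] _ s_gt0.
by apply: foldr_Rmin_gt0 => [|y ys]; apply: s_gt0; rewrite inE ?eqxx ?ys ?orbT.
Qed.

Section Average.
Variables (n p : nat) (f : 'I_n -> vec p -> R) (g : 'I_n -> vec p -> vec p).
Hypothesis n_gt0 : (0 < n)%nat.

Definition favg (z : vec p) := sumI (fun i => f i z) / INR n.
Definition gavg (z : vec p) : vec p := fun l => fsum (fun i => g i z l) / INR n.

Lemma avg_quad_model (c : 'I_n -> R) x z :
  fsum (fun i => f i x + dot (g i x) (vsub z x) + c i / 2 * dot (vsub z x) (vsub z x)) / INR n
  = favg x + dot (gavg x) (vsub z x) + sumI c / INR n / 2 * dot (vsub z x) (vsub z x).
Proof.
have n_pos : 0 < INR n by apply/lt_0_INR/ltP.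
have -> : dot (gavg x) (vsub z x) = fsum (fun i => dot (g i x) (vsub z x)) / INR n.
  rewrite /Rdiv Rmult_comm -fsumZ.
  under [RHS]eq_fsum => i do rewrite -fsumZ.
  rewrite /dot /fdot /fsum exchange_big /=; apply: eq_bigr => l _.
  by rewrite /gavg /Rdiv big_distrl /= big_distrl /=; apply: eq_bigr => i _; ring.
rewrite !fsumD [fsum (fun i => c i / 2 * _)](_ : _ = sumI c / 2 * dot (vsub z x) (vsub z x)).
  by rewrite /favg; change (sumI (fun i => f i x)) with (fsum (fun i => f i x)); field; lra.
by rewrite /Rdiv Rmult_assoc Rmult_comm -fsumZ; apply: eq_fsum => i; ring.
Qed.

Lemma quad_lower_avg (c : 'I_n -> R) :
  (forall i, quad_lower_bound (f i) (g i) (c i)) -> quad_lower_bound favg gavg (sumI c / INR n).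
Proof.
move=> f_lower x z; rewrite -avg_quad_model /favg /Rdiv.
apply: Rmult_le_compat_r; first by apply/Rlt_le/Rinv_0_lt_compat/lt_0_INR/ltP.
exact: (fsum_le (fun i => f_lower i x z)).
Qed.

Lemma quad_upper_avg (c : 'I_n -> R) :
  (forall i, quad_upper_bound (f i) (g i) (c i)) -> quad_upper_bound favg gavg (sumI c / INR n).
Proof.
move=> f_upper x z; rewrite -avg_quad_model /favg /Rdiv.
apply: Rmult_le_compat_r; first by apply/Rlt_le/Rinv_0_lt_compat/lt_0_INR/ltP.
exact: (fsum_le (fun i => f_upper i x z)).
Qed.

End Average.

Lemma young_dot p (a e : vec p) alpha delta : 0 <= alpha -> 0 < delta ->
  dot (vsub a (vscale alpha e)) (vsub a (vscale alpha e)) <=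
  (1 + alpha * delta) * dot a a + alpha * (alpha + / delta) * dot e e.
Proof.
move=> alpha_ge0 delta_gt0.
have -> : vsub a (vscale alpha e) = vcomb3 1 (- alpha) 0 a e e.
  by apply: functional_extensionality => l; rewrite /vcomb3 /vsub /vscale; ring.
have := dot_ge0 (vcomb3 1 (/ delta) 0 a e e).
rewrite !dot_vcomb3; move: (dot a a) (dot a e) (dot e e) => aa ae ee sq_ge0.
have sq : 0 <= aa + 2 / delta * ae + / delta * / delta * ee by lra.
have := Rmult_le_pos _ _ (Rmult_le_pos _ _ alpha_ge0 (Rlt_le _ _ delta_gt0)) sq.
have -> : alpha * delta * (aa + 2 / delta * ae + / delta * / delta * ee) =
          alpha * delta * aa + 2 * alpha * ae + alpha * / delta * ee by field; lra.
lra.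
Qed.

Lemma affine_recursion_bound (e : nat -> R) q C : 0 <= q < 1 -> 0 <= C ->
  (forall k, e k.+1 <= q * e k + C) -> forall k, e k <= q ^ k * e 0%nat + C / (1 - q).
Proof.
move=> q01 C_ge0 e_step.
have : 0 <= C / (1 - q) by apply: Rmult_le_pos; [|apply/Rlt_le/Rinv_0_lt_compat]; lra.
move=> C'_ge0; elim=> [|k IH]; first by rewrite /=; lra.
apply: Rle_trans (e_step k) _; rewrite /=.
have -> : q * (q ^ k) * e 0%nat + C / (1 - q) = q * (q ^ k * e 0%nat + C / (1 - q)) + C.
  by field; lra.
by apply: Rplus_le_compat_r; apply: Rmult_le_compat_l; lra.
Qed.

Section NearDGD.
Variables (n p t : nat) (W : mat n) (beta : R)
  (f : 'I_n -> vec p -> R) (g : 'I_n -> vec p -> vec p) (mu Lf : 'I_n -> R) (alpha : R)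
  (s0 xstar : vec p) (ustar : 'I_n -> vec p) (x y : nat -> 'I_n -> vec p).

Local Notation L := (maxI Lf).
Local Notation mubar := (sumI mu / INR n).
Local Notation Lbar := (sumI Lf / INR n).
Local Notation c2 := (2 * mubar * Lbar / (mubar + Lbar)).
Local Notation nu := (2 * alpha * minI (fun i => mu i * Lf i / (mu i + Lf i))).
Local Notation U := (snorm ustar).
Local Notation D := (snorm (fun i => vsub s0 (ustar i)) + (nu + 4) / nu * U).
Local Notation delta := (c2 / (2 * (1 - alpha * c2))).
Local Notation c1 := (sqrt (1 - alpha * c2 / 2)).
Local Notation c3 := (sqrt (alpha * (alpha + / delta)) * D * L).
Local Notation dist_y k := (snorm (fun i => vsub (y k i) (ustar i))).
Local Notation T z := (vsub z (vscale alpha (gavg g z))).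
Local Notation err k :=
  (fun l => fsum (fun j => g j (x k j) l - g j (vmean (x k)) l) / INR n).
Local Notation E k := (vsub (vmean (x k)) xstar).

Hypotheses (W_sym : sym_mat W) (W_ds : doubly_stochastic W) (W_eig1 : simple_eig1 W)
  (W_eig : forall lam, is_eigenvalue W lam -> lam <> 1 -> Rabs lam <= beta) (beta_ge0 : 0 <= beta)
  (mu_gt0 : forall i, 0 < mu i) (Lf_gt0 : forall i, 0 < Lf i)
  (f_lower : forall i, quad_lower_bound (f i) (g i) (mu i))
  (f_upper : forall i, quad_upper_bound (f i) (g i) (Lf i))
  (g_lip : forall i, lipschitz (Lf i) (g i))
  (xstar_min : is_minimizer (fun z => sumI (fun i => f i z)) xstar)
  (ustar_min : forall i, is_minimizer (f i) (ustar i))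
  (y0 : forall i, y 0%nat i = s0) (x0 : forall i, x 0%nat i = s0)
  (x_def : forall k i l, x k i l = \big[Rplus/0]_(j < n) (mpow W t i j * y k j l))
  (y_def : forall k i, y k.+1 i = vsub (x k i) (vscale alpha (g i (x k i))))
  (n_gt0 : (0 < n)%nat) (alpha_gt0 : 0 < alpha) (alpha_L : alpha <= 1 / L)
  (alpha_c4 : alpha <= 2 / (mubar + Lbar)) (alpha_c2 : alpha * c2 < 1).

Let n_pos : 0 < INR n. Proof. exact/lt_0_INR/ltP. Qed.
Let i0 : 'I_n := Ordinal n_gt0.

Let Lf_le i : Lf i <= L. Proof. exact: maxI_ge. Qed.
Let L_gt0 : 0 < L. Proof. exact: Rlt_le_trans (Lf_gt0 i0) (Lf_le i0). Qed.

Let fsum_gt0 (c : 'I_n -> R) : (forall i, 0 < c i) -> 0 < sumI c.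
Proof.
by move=> c_gt0; apply: Rlt_le_trans (c_gt0 i0) (fsum_ge_term i0 (fun i => Rlt_le _ _ (c_gt0 i))).
Qed.

Let mubar_gt0 : 0 < mubar. Proof. exact: Rdiv_lt_0_compat (fsum_gt0 mu_gt0) n_pos. Qed.
Let Lbar_gt0 : 0 < Lbar. Proof. exact: Rdiv_lt_0_compat (fsum_gt0 Lf_gt0) n_pos. Qed.
Let c2_gt0 : 0 < c2. Proof. by apply: Rdiv_lt_0_compat; nra. Qed.

Let muL_gt0 i : 0 < mu i * Lf i / (mu i + Lf i).
Proof. by have := mu_gt0 i; have := Lf_gt0 i => *; apply: Rdiv_lt_0_compat; nra. Qed.

Let minI_muL_gt0 : 0 < minI (fun i => mu i * Lf i / (mu i + Lf i)).
Proof. exact: minI_gt0 n_gt0 muL_gt0. Qed.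

Let nu_gt0 : 0 < nu.
Proof. by have := minI_muL_gt0; nra. Qed.

Let nu_le_local i : nu <= 2 * alpha * mu i * Lf i / (mu i + Lf i).
Proof.
have -> : 2 * alpha * mu i * Lf i / (mu i + Lf i) = 2 * alpha * (mu i * Lf i / (mu i + Lf i)).
  by field; have := mu_gt0 i; have := Lf_gt0 i; lra.
by apply: Rmult_le_compat_l; [lra | apply: minI_le].
Qed.

Let nu_lt2 : nu < 2.
Proof.
have : mu i0 * Lf i0 / (mu i0 + Lf i0) < Lf i0.
  have := mu_gt0 i0; have := Lf_gt0 i0 => mu0 L0.
  apply: (Rmult_lt_reg_r (mu i0 + Lf i0)); first lra.
  have -> : mu i0 * Lf i0 / (mu i0 + Lf i0) * (mu i0 + Lf i0) = mu i0 * Lf i0 by field; lra.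
  nra.
have := nu_le_local i0; have := Lf_le i0.
have : alpha * L <= 1.
  have := Rmult_le_compat_r L _ _ (Rlt_le _ _ L_gt0) alpha_L.
  by have -> : 1 / L * L = 1 by field; lra.
nra.
Qed.

Lemma x_mix k : x k = mix (mpow W t) (y k).
Proof.
by apply: functional_extensionality => i; apply: functional_extensionality => l; rewrite x_def.
Qed.

Lemma local_contraction k :
  ssq (fun i => vsub (y k.+1 i) (ustar i)) <= (1 - nu) * ssq (fun i => vsub (x k i) (ustar i)).
Proof.
rewrite /ssq -fsumZ; apply: fsum_le => i.
have alpha_Li : alpha <= 1 / Lf i.
  apply: Rle_trans alpha_L _; apply: Rmult_le_compat_l; first lra.
  exact: Rinv_le_contravar (Lf_gt0 i) (Lf_le i).
have /= := gradient_step_contraction_inv (f_lower i) (f_upper i) (mu_gt0 i) (Lf_gt0 i) alpha_gt0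
  alpha_Li (x k i) (ustar i).
have -> : vsub (ustar i) (vscale alpha (g i (ustar i))) = ustar i.
  apply: functional_extensionality => l; rewrite /vsub /vscale.
  by rewrite (quad_upper_grad_eq0 (Lf_gt0 i) (f_upper i) (ustar_min i)); ring.
rewrite -y_def => H; apply: Rle_trans H _.
by apply: Rmult_le_compat_r; [apply: dot_ge0 | have := nu_le_local i; lra].
Qed.

Lemma mix_dist_le k : snorm (fun i => vsub (x k i) (ustar i)) <= dist_y k + 2 * U.
Proof.
have Wt_ds := doubly_stochastic_mpow t W_ds.
have -> : (fun i => vsub (x k i) (ustar i)) =
    fun i => vadd (mix (mpow W t) (fun j => vsub (y k j) (ustar j)) i)
                  (vsub (mix (mpow W t) ustar i) (ustar i)).
  apply: functional_extensionality => i; apply: functional_extensionality => l.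
  rewrite x_mix /mix /vadd /vsub.
  have -> : coord (fun j => vsub (y k j) (ustar j)) l =
            fun j => 1 * coord (y k) l j + (-1) * coord ustar l j.
    by apply: functional_extensionality => j; rewrite /coord /vsub; ring.
  by rewrite mulmv_lin2; ring.
apply: Rle_trans (snorm_triangle _ _) _.
have := snorm_le (ssq_mix_le (fun j => vsub (y k j) (ustar j)) Wt_ds).
have := Rle_trans _ _ _ (snorm_triangleB _ _)
  (Rplus_le_compat_r U _ _ (snorm_le (ssq_mix_le ustar Wt_ds))).
lra.
Qed.

Lemma local_dist_step k : dist_y k.+1 <= (1 - nu / 2) * dist_y k + (1 - nu / 2) * (2 * U).
Proof.
have q_ge0 : 0 <= 1 - nu / 2 by have := nu_lt2; lra.
have : ssq (fun i => vsub (y k.+1 i) (ustar i)) <=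
       (1 - nu / 2) ^ 2 * ssq (fun i => vsub (x k i) (ustar i)).
  by apply: Rle_trans (local_contraction k) _; apply: Rmult_le_compat_r; [apply: ssq_ge0 | nra].
move=> /sqrt_le_1_alt; rewrite sqrt_mult ?sqrt_pow2 //; [|exact: pow2_ge_0 | exact: ssq_ge0].
move=> /Rle_trans; apply; rewrite -Rmult_plus_distr_l.
exact: Rmult_le_compat_l (mix_dist_le k).
Qed.

Lemma local_dist_bound k : dist_y k <= dist_y 0 + 4 / nu * U.
Proof.
have U_ge0 := snorm_ge0 ustar; have e0_ge0 := snorm_ge0 (fun i => vsub (y 0%nat i) (ustar i)).
have := @affine_recursion_bound (fun k => dist_y k) (1 - nu / 2) ((1 - nu / 2) * (2 * U))
  ltac:(lra) ltac:(apply: Rmult_le_pos; lra) local_dist_step k.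
have -> : (1 - nu / 2) * (2 * U) / (1 - (1 - nu / 2)) = 4 / nu * U - 2 * U.
  by have m_gt0 := minI_muL_gt0; field; repeat split; lra.
have := pow_incr (1 - nu / 2) 1 k ltac:(lra); rewrite pow1 => q_le1.
have := Rmult_le_compat_r _ _ _ e0_ge0 q_le1.
lra.
Qed.

Lemma consensus_y k : snorm (vdev (y k)) <= D.
Proof.
have -> : vdev (y k) = fun i => vadd (vdev (fun j => vsub (y k j) (ustar j)) i) (vdev ustar i).
  apply: functional_extensionality => i; apply: functional_extensionality => l.
  rewrite /vdev /vadd /vsub /vmean /coord fsumB.
  set a := fsum (fun j => y k j l); set b := fsum (fun j => ustar j l); field; lra.
apply: Rle_trans (snorm_triangle _ _) _.
have := snorm_le (ssq_vdev_le n_gt0 (fun j => vsub (y k j) (ustar j))).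
have := snorm_le (ssq_vdev_le n_gt0 ustar).
have -> : (nu + 4) / nu * U = 4 / nu * U + U by have m_gt0 := minI_muL_gt0; field; split; lra.
have -> : snorm (fun i => vsub s0 (ustar i)) = dist_y 0.
  by congr snorm; apply: functional_extensionality => i; rewrite y0.
have := local_dist_bound k; lra.
Qed.

Lemma consensus_x k : snorm (vdev (x k)) <= beta ^ t * D.
Proof.
have := ssq_vdev_mix_mpow n_gt0 W_sym W_ds W_eig1 W_eig t (y k); rewrite -x_mix.
move=> /sqrt_le_1_alt; rewrite sqrt_mult; [|exact/pow_le/pow2_ge_0 | exact: ssq_ge0].
rewrite -pow_mult Nat.mul_comm pow_mult sqrt_pow2; last exact: pow_le.
move=> /Rle_trans; apply; apply: Rmult_le_compat_l; [exact: pow_le | exact: consensus_y].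
Qed.

Lemma gavg_xstar l : gavg g xstar l = 0.
Proof.
apply: (quad_upper_grad_eq0 Lbar_gt0 (quad_upper_avg n_gt0 f_upper)) => z.
apply: Rmult_le_compat_r; [exact/Rlt_le/Rinv_0_lt_compat | exact: xstar_min].
Qed.

Lemma mean_step k : E k.+1 = vsub (vsub (T (vmean (x k))) (T xstar)) (vscale alpha (err k)).
Proof.
have -> : vmean (x k.+1) = vmean (y k.+1).
  by rewrite x_mix vmean_mix //; apply: doubly_stochastic_mpow.
apply: functional_extensionality => l; rewrite /vsub /vscale gavg_xstar /vmean /coord /gavg.
rewrite (eq_fsum (G := fun i => x k i l - alpha * g i (x k i) l)); last first.
  by move=> i; rewrite y_def.
rewrite fsumB fsumZ fsumB.
set a := fsum (fun i => x k i l); set b := fsum (fun i => g i (x k i) l).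
set c := fsum (fun i => g i _ l); field; lra.
Qed.

Lemma err_bound k : norm (err k) <= L * snorm (vdev (x k)).
Proof.
have -> : err k = vscale (/ INR n)
    (fun l => \big[Rplus/0]_(j < n) vsub (g j (x k j)) (g j (vmean (x k))) l).
  by apply: functional_extensionality => l; rewrite /vscale /Rdiv Rmult_comm.
rewrite normZ Rabs_pos_eq; last exact/Rlt_le/Rinv_0_lt_compat.
apply: Rle_trans (Rmult_le_compat_l _ _ _ _ (norm_sum _)) _; first exact/Rlt_le/Rinv_0_lt_compat.
have : fsum (fun j => norm (vsub (g j (x k j)) (g j (vmean (x k)))))
       <= fsum (fun _ : 'I_n => L * snorm (vdev (x k))).
  apply: fsum_le => j; apply: Rle_trans (g_lip j _ _) _.
  apply: Rmult_le_compat; [exact/Rlt_le | exact: norm_ge0 | exact: Lf_le |].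
  exact: (norm_le_snorm (vdev (x k)) j).
rewrite fsum_const card_ord => sum_le.
have := Rmult_le_compat_l (/ INR n) _ _ (Rlt_le _ _ (Rinv_0_lt_compat _ n_pos)) sum_le.
by have -> : / INR n * (INR n * (L * snorm (vdev (x k)))) = L * snorm (vdev (x k)) by field; lra.
Qed.

Let delta_gt0 : 0 < delta.
Proof. by apply: Rdiv_lt_0_compat; have := c2_gt0; lra. Qed.

Let c1_sqr : c1 ^ 2 = 1 - alpha * c2 / 2.
Proof. by rewrite /= Rmult_1_r; apply: sqrt_sqrt; have := c2_gt0; nra. Qed.

Let D_ge0 : 0 <= D.
Proof.
have nu_pos := nu_gt0.
apply: Rplus_le_le_0_compat; first exact: snorm_ge0.
apply: Rmult_le_pos; last exact: snorm_ge0.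
by apply: Rmult_le_pos; [lra | apply/Rlt_le/Rinv_0_lt_compat].
Qed.

Lemma mean_dist_sq_step k :
  dot (E k.+1) (E k.+1) <= c1 ^ 2 * dot (E k) (E k) + (c3 * beta ^ t) ^ 2.
Proof.
have ad_ge0 : 0 <= alpha * (alpha + / delta).
  by have := Rinv_0_lt_compat _ delta_gt0; nra.
rewrite mean_step; apply: Rle_trans (young_dot _ _ (Rlt_le _ _ alpha_gt0) delta_gt0) _.
have contr := gradient_step_contraction (quad_lower_avg n_gt0 f_lower)
  (quad_upper_avg n_gt0 f_upper) mubar_gt0 Lbar_gt0 alpha_gt0 alpha_c4 (vmean (x k)) xstar.
have err_le : dot (err k) (err k) <= (L * (beta ^ t * D)) ^ 2.
  rewrite -norm_sqr /= Rmult_1_r.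
  have : norm (err k) <= L * (beta ^ t * D).
    apply: Rle_trans (err_bound k) _.
    by apply: Rmult_le_compat_l; [exact: Rlt_le | exact: consensus_x].
  by have := norm_ge0 (err k); move: (norm _) (L * _) => a b; nra.
have -> : c1 ^ 2 = (1 + alpha * delta) * (1 - 2 * alpha * mubar * Lbar / (mubar + Lbar)).
  have -> : 2 * alpha * mubar * Lbar / (mubar + Lbar) = alpha * c2 by rewrite /Rdiv; ring.
  rewrite c1_sqr; have := alpha_c2; move: (c2) => c ac; field; lra.
have -> : (c3 * beta ^ t) ^ 2 = alpha * (alpha + / delta) * (L * (beta ^ t * D)) ^ 2.
  by rewrite -{2}(sqrt_sqrt _ ad_ge0); ring.
apply: Rplus_le_compat; last exact: Rmult_le_compat_l ad_ge0 err_le.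
apply: Rle_trans (Rmult_le_compat_l _ _ _ _ contr) (Req_le _ _ _); last by ring.
by have := Rmult_lt_0_compat _ _ alpha_gt0 delta_gt0; lra.
Qed.

Lemma mean_dist_bound k :
  norm (E k) <= c1 ^ k * norm (vsub s0 xstar) + c3 / sqrt (1 - c1 ^ 2) * beta ^ t.
Proof.
have q01 : 0 <= c1 ^ 2 < 1 by rewrite c1_sqr; have := c2_gt0; nra.
have := @affine_recursion_bound (fun k => dot (E k) (E k)) (c1 ^ 2) ((c3 * beta ^ t) ^ 2)
  q01 (pow2_ge_0 _) mean_dist_sq_step k.
have -> : E 0 = vsub s0 xstar.
  apply: functional_extensionality => l; rewrite /vsub /vmean /coord.
  rewrite (eq_fsum (G := fun _ => s0 l)) ?fsum_const ?card_ord; last by move=> i; rewrite x0.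
  by field; lra.
have c3_ge0 : 0 <= c3.
  by apply: Rmult_le_pos; [apply: Rmult_le_pos; [apply: sqrt_pos | apply: D_ge0] | lra].
have sq_gt0 : 0 < sqrt (1 - c1 ^ 2) by apply: sqrt_lt_R0; lra.
have -> : (c1 ^ 2) ^ k * dot (vsub s0 xstar) (vsub s0 xstar) =
          (c1 ^ k * norm (vsub s0 xstar)) ^ 2.
  by rewrite -pow_mult Nat.mul_comm pow_mult -norm_sqr; ring.
have -> : (c3 * beta ^ t) ^ 2 / (1 - c1 ^ 2) = (c3 / sqrt (1 - c1 ^ 2) * beta ^ t) ^ 2.
  have sq_sqr : sqrt (1 - c1 ^ 2) * sqrt (1 - c1 ^ 2) = 1 - c1 ^ 2 by apply: sqrt_sqrt; lra.
  by rewrite -{1}sq_sqr; field; lra.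
have A_ge0 : 0 <= c1 ^ k * norm (vsub s0 xstar).
  by apply: Rmult_le_pos; [apply/pow_le/sqrt_pos | apply: norm_ge0].
have B_ge0 : 0 <= c3 / sqrt (1 - c1 ^ 2) * beta ^ t.
  apply: Rmult_le_pos; last exact: pow_le.
  by apply: Rmult_le_pos; [lra | apply/Rlt_le/Rinv_0_lt_compat].
move: (c1 ^ k * _) (c3 / _ * _) A_ge0 B_ge0 => A B A_ge0 B_ge0 H.
by apply: le_of_sqr_le; [lra | rewrite norm_sqr /= Rmult_1_r in H *; nra].
Qed.

End NearDGD.

Theorem corollary2
  (n p t : nat) (W : mat n) (beta : R)
  (f : 'I_n -> vec p -> R) (g : 'I_n -> vec p -> vec p)
  (mu Lf : 'I_n -> R) (alpha : R) (s0 xstar : vec p) (ustar : 'I_n -> vec p)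
  (x y : nat -> 'I_n -> vec p)
  (* network *)
  (HWsym : sym_mat W) (HWds : doubly_stochastic W)
  (HWdiag : forall i, 0 < W i i) (HWconn : connected_net W)
  (HW1 : is_eigenvalue W 1) (HW1s : simple_eig1 W)
  (HWeig : forall lam, is_eigenvalue W lam -> lam <> 1 -> -1 < lam < 1)
  (Hbeta : second_eig_mag W beta) (Hbeta01 : 0 < beta < 1)
  (Ht : (1 <= t)%nat)
  (* local functions *)
  (Hmu : forall i, 0 < mu i) (HL : forall i, 0 < Lf i)
  (Hgrad : forall i, is_gradient (f i) (g i))
  (Hsc : forall i, strongly_convex (mu i) (f i))
  (Hlip : forall i, lipschitz (Lf i) (g i))
  (Hxstar : is_minimizer (fun z => sumI (fun i => f i z)) xstar)
  (Hustar : forall i, is_minimizer (f i) (ustar i))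
  (* NEAR-DGD^t from the common initial point s0 *)
  (Hy0 : forall i, y 0%nat i = s0)
  (Hx0 : forall i, x 0%nat i = s0)
  (Hx : forall k i l, x k i l = \big[Rplus/0]_(j < n) (mpow W t i j * y k j l))
  (Hy : forall k i, y (S k) i = vsub (x k i) (vscale alpha (g i (x k i)))) :
  let L := maxI Lf in
  let mubar := sumI mu / INR n in
  let Lbar := sumI Lf / INR n in
  let c2 := 2 * mubar * Lbar / (mubar + Lbar) in
  let c4 := 2 / (mubar + Lbar) in
  let nu := 2 * alpha * minI (fun i => mu i * Lf i / (mu i + Lf i)) in
  let D := snorm (fun i => vsub s0 (ustar i)) + (nu + 4) / nu * snorm ustar in
  0 < alpha -> alpha <= Rmin (1 / L) c4 -> alpha * c2 < 1 ->
  let delta := c2 / (2 * (1 - alpha * c2)) in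
  let c1 := sqrt (1 - alpha * c2 / 2) in
  let c3 := sqrt (alpha * (alpha + / delta)) * D * L in
  forall (k : nat) (i : 'I_n),
    norm (vsub (x k i) xstar)
      <= c1 ^ k * norm (vsub s0 xstar) + c3 / sqrt (1 - c1 ^ 2) * beta ^ t
         + beta ^ t * D /\
    norm (vsub (y k i) xstar)
      <= c1 ^ k * norm (vsub s0 xstar) + c3 / sqrt (1 - c1 ^ 2) * beta ^ t
         + beta ^ t * D + 2 * D.
Proof.
move=> L mubar Lbar c2 c4 nu D alpha_gt0 alpha_le alpha_c2 delta c1 c3 k i.
subst L mubar Lbar c2 c4 nu D delta c1 c3.
have n_gt0 : (0 < n)%nat := leq_ltn_trans (leq0n i) (ltn_ord i).
have beta_ge0 : 0 <= beta by lra.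
have W_eig := proj2 Hbeta.
have f_lower j := strongly_convex_quad_lower (Hgrad j) (Hsc j).
have f_upper j := lipschitz_quad_upper (Hgrad j) (Hlip j).
have alpha_L := Rle_trans _ _ _ alpha_le (Rmin_l _ _).
have alpha_c4 := Rle_trans _ _ _ alpha_le (Rmin_r _ _).
have x_dev : norm (vsub (x k i) (vmean (x k))) <= _ :=
  Rle_trans _ _ _ (norm_le_snorm (vdev (x k)) i)
  (consensus_x HWsym HWds HW1s W_eig beta_ge0 Hmu HL f_lower f_upper Hustar Hy0 Hx Hy
    n_gt0 alpha_gt0 alpha_L k).
have y_dev : norm (vsub (y k i) (vmean (y k))) <= _ :=
  Rle_trans _ _ _ (norm_le_snorm (vdev (y k)) i)
  (consensus_y HWds Hmu HL f_lower f_upper Hustar Hy0 Hx Hy n_gt0 alpha_gt0 alpha_L k).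
have mean_dist := mean_dist_bound HWsym HWds HW1s W_eig beta_ge0 Hmu HL f_lower f_upper Hlip
  Hxstar Hustar Hy0 Hx0 Hx Hy n_gt0 alpha_gt0 alpha_L alpha_c4 alpha_c2 k.
have vmean_xy : vmean (x k) = vmean (y k).
  by rewrite (x_mix Hx) vmean_mix //; apply: doubly_stochastic_mpow.
have D_ge0 := Rle_trans _ _ _ (norm_ge0 _) y_dev.
have := pow_le _ t beta_ge0 => beta_t_ge0.
split.
  by have := norm_triangleB (x k i) (vmean (x k)) xstar; lra.
have := norm_triangleB (y k i) (vmean (y k)) xstar; rewrite vmean_xy in mean_dist.
by have := Rmult_le_pos _ _ beta_t_ge0 D_ge0; lra.
Qed.
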